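(* Let $R$ be a commutative ring with identity satisfying Property $D$. Then the trivial extension $R[x]\propto R[[x]]$ satisfies Property $D$.
   Context: $R[[x]]$ is regarded as an $R[x]$-module via multiplication. For a ring $A$ and an $A$-module $M$, $A\propto M$ is $A\times M$ with coordinatewise addition and $(a,m)(b,n)=(ab,an+bm)$. A ring $A$ satisfies Property $D$ if $A\setminus\mathfrak{N}(A)=\mathrm{reg}(A)$, where $\mathfrak{N}(A)$ is the nilradical and $\mathrm{reg}(A)$ the set of regular elements. *)

From mathcomp Require Import all_boot all_algebra.
Set Implicit Arguments. Unset Strict Implicit. Unset Printing Implicit Defensive.
Import GRing.Theory.
Local Open Scope ring_scope.

Definition nilpotent_in {T : Type} (mul : T -> T -> T) (one zero : T) (a : T) :=
  exists n : nat, iter n (mul a) one = zero.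
Definition regular_in {T : Type} (mul : T -> T -> T) (zero : T) (a : T) :=
  forall b : T, mul a b = zero -> b = zero.
Definition PropertyD_in {T : Type} (mul : T -> T -> T) (one zero : T) :=
  forall a : T, ~ nilpotent_in mul one zero a <-> regular_in mul zero a.

Definition PropertyD (R : comNzRingType) := PropertyD_in (@GRing.mul R) 1 0.

Definition pseries (R : Type) := nat -> R.
Definition ps0 (R : comNzRingType) : pseries R := fun _ => 0.
Definition psadd (R : comNzRingType) (f g : pseries R) : pseries R := fun n => f n + g n.
Definition polyps_mul (R : comNzRingType) (p : {poly R}) (f : pseries R) : pseries R :=
  fun n => \sum_(i < n.+1) p`_i * f (n - i)%N.

Definition triv_ext_mul {A M : Type} (Amul : A -> A -> A) (Madd : M -> M -> M)
  (act : A -> M -> M) (u v : A * M) : A * M :=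
  (Amul u.1 v.1, Madd (act u.1 v.2) (act v.1 u.2)).

Definition PolyPS (R : comNzRingType) := ({poly R} * pseries R)%type.
Definition PolyPS_mul (R : comNzRingType) : PolyPS R -> PolyPS R -> PolyPS R :=
  triv_ext_mul (@GRing.mul {poly R}) (@psadd R) (@polyps_mul R).
Definition PolyPS_one (R : comNzRingType) : PolyPS R := (1, ps0 R).
Definition PolyPS_zero (R : comNzRingType) : PolyPS R := (0, ps0 R).

From mathcomp Require Import all_boot all_algebra.
From Stdlib Require Import Classical FunctionalExtensionality.
Set Implicit Arguments. Unset Strict Implicit. Unset Printing Implicit Defensive.
Import GRing.Theory.
Local Open Scope ring_scope.

(* Since (p, f)^(n+1) = (p^(n+1), (n+1) p^n f), the element (p, f) is
   nilpotent as soon as p is; so if it is not nilpotent, some coefficient of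
   p is not nilpotent.  Let p_k be the first one: it is regular by Property D,
   and p = a + x^k u with a nilpotent and u(0) = p_k.  A power series with
   regular constant term acts injectively on R[[x]], hence so do x^k u and
   its perturbation p by the nilpotent a (as (x^k u)^M = p c when a^M = 0).
   Injectivity of p on R[[x]] (which contains R[x]) makes (p, f) regular. *)

Lemma regular_in_not_nilpotent (T : Type) (mul : T -> T -> T) (one zero a : T) :
  one <> zero -> regular_in mul zero a -> ~ nilpotent_in mul one zero a.
Proof.
by move=> one_neq0 reg_a [n]; elim: n => [|n IHn] //= /reg_a.
Qed.

Section Nilpotent.
Variable T : comPzRingType.
Implicit Types x y : T.

Definition nilpotent x := exists n, x ^+ n = 0.

Lemma nilpotent_inP x : nilpotent_in *%R 1 0 x <-> nilpotent x.
Proof. by split=> -[n xn0]; exists n; rewrite -iter_mulr_1 in xn0 *. Qed.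

Lemma regular_inP x : regular_in *%R 0 x <-> GRing.lreg x.
Proof.
split=> [reg_x y z xy_xz | reg_x y xy0]; last by apply: reg_x; rewrite xy0 mulr0.
apply/eqP; rewrite -subr_eq0; apply/eqP; apply: reg_x.
by rewrite mulrBr xy_xz subrr.
Qed.

Lemma nilpotent0 : nilpotent 0.
Proof. by exists 1%N; rewrite expr1. Qed.

Lemma expr_eq0_leq x m n : x ^+ m = 0 -> (m <= n)%N -> x ^+ n = 0.
Proof. by move=> xm0 le_mn; rewrite -(subnKC le_mn) exprD xm0 mul0r. Qed.

Lemma nilpotentD x y : nilpotent x -> nilpotent y -> nilpotent (x + y).
Proof.
move=> [m xm0] [n yn0]; exists (m + n)%N; rewrite exprDn big1 // => -[i /= lt_i] _.
have [le_ni | lt_in] := leqP n i; first by rewrite (expr_eq0_leq yn0 le_ni) mulr0 mul0rn.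
by rewrite (@expr_eq0_leq x m) ?mul0r ?mul0rn // -addnBA ?leq_addr // ltnW.
Qed.

Lemma nilpotentMr x y : nilpotent x -> nilpotent (x * y).
Proof. by move=> [n xn0]; exists n; rewrite exprMn xn0 mul0r. Qed.

End Nilpotent.

Lemma nilpotent_take_poly (R : comNzRingType) (p : {poly R}) k :
  (forall i, (i < k)%N -> nilpotent p`_i) -> nilpotent (take_poly k p).
Proof.
move=> nil_low; rewrite /take_poly poly_def.
elim/big_rec: _ => [|i q _ nil_q]; first exact: nilpotent0.
apply: nilpotentD nil_q; rewrite -mul_polyC; apply: nilpotentMr.
by have [n cn0] := nil_low i (ltn_ord i); exists n; rewrite -polyC_exp cn0.
Qed.

Lemma exists_first_nonnilpotent_coef (R : comNzRingType) (p : {poly R}) :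
  ~ nilpotent p ->
  exists k, (forall i, (i < k)%N -> nilpotent p`_i) /\ ~ nilpotent p`_k.
Proof.
move=> nnil_p; apply: NNPP => no_first; apply: nnil_p.
have nil_coef k : nilpotent p`_k.
  elim/ltn_ind: k => k IHk; apply: NNPP => nnil_k.
  by apply: no_first; exists k.
by rewrite -(take_poly_id (leqnn (size p))); apply: nilpotent_take_poly.
Qed.

Section PolySeriesAction.
Variable R : comNzRingType.
Implicit Types (p q : {poly R}) (f g : pseries R).

Definition ps_trunc n f : {poly R} := \poly_(i < n.+1) f i.

Lemma eq_coefMr p (A B : {poly R}) n :
  (forall j, (j <= n)%N -> A`_j = B`_j) -> (p * A)`_n = (p * B)`_n.
Proof. by move=> eqAB; rewrite !coefM; apply: eq_bigr => i _; rewrite eqAB ?leq_subr. Qed.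

Lemma polyps_mulE p f m n : (n <= m)%N -> polyps_mul p f n = (p * ps_trunc m f)`_n.
Proof.
move=> le_nm; rewrite /polyps_mul coefM; apply: eq_bigr => i _.
by rewrite coef_poly ltnS (leq_trans (leq_subr _ _) le_nm).
Qed.

Lemma polyps_mul_poly p q : polyps_mul p (fun n => q`_n) = (fun n => (p * q)`_n).
Proof.
apply: functional_extensionality => n; rewrite (polyps_mulE _ _ (leqnn n)).
by apply: eq_coefMr => j le_jn; rewrite coef_poly ltnS le_jn.
Qed.

Lemma polyps_mulA p q f : polyps_mul (p * q) f = polyps_mul p (polyps_mul q f).
Proof.
apply: functional_extensionality => n.
rewrite !(polyps_mulE _ _ (leqnn n)) -mulrA; apply: eq_coefMr => j le_jn.
by rewrite coef_poly ltnS le_jn (polyps_mulE _ _ le_jn).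
Qed.

Lemma polyps_mulDl p q f :
  polyps_mul (p + q) f = psadd (polyps_mul p f) (polyps_mul q f).
Proof.
apply: functional_extensionality => n.
by rewrite /psadd /polyps_mul -big_split; apply: eq_bigr => i _; rewrite coefD mulrDl.
Qed.

Lemma polyps_mul0 f : polyps_mul 0 f = ps0 R.
Proof.
apply: functional_extensionality => n.
by rewrite /polyps_mul big1 // => i _; rewrite coef0 mul0r.
Qed.

Lemma polyps_mulr0 p : polyps_mul p (ps0 R) = ps0 R.
Proof.
apply: functional_extensionality => n.
by rewrite /polyps_mul big1 // => i _; rewrite mulr0.
Qed.

Lemma polyps_mul1 f : polyps_mul 1 f = f.
Proof.
apply: functional_extensionality => n.
by rewrite (polyps_mulE _ _ (leqnn n)) mul1r coef_poly ltnS leqnn.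
Qed.

Lemma psaddr0 f : psadd f (ps0 R) = f.
Proof. by apply: functional_extensionality => n; rewrite /psadd addr0. Qed.

Lemma polyps_mulMXn p k g n : polyps_mul (p * 'X^k) g (n + k) = polyps_mul p g n.
Proof.
rewrite (polyps_mulE _ _ (leqnn _)) mulrAC coefMXn ltnNge leq_addl addnK /=.
by rewrite (polyps_mulE _ _ (leq_addr k n)).
Qed.

Definition ps_regular p := forall g, polyps_mul p g = ps0 R -> g = ps0 R.

Lemma ps_regular1 : ps_regular 1.
Proof. by move=> g; rewrite polyps_mul1. Qed.

Lemma ps_regularM p q : ps_regular p -> ps_regular q -> ps_regular (p * q).
Proof. by move=> reg_p reg_q g; rewrite polyps_mulA => /reg_p/reg_q. Qed.

Lemma ps_regularX p n : ps_regular p -> ps_regular (p ^+ n).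
Proof.
move=> reg_p; elim: n => [|n IHn]; first exact: ps_regular1.
by rewrite exprS; apply: ps_regularM.
Qed.

Lemma ps_regularMl p q : ps_regular (p * q) -> ps_regular q.
Proof. by move=> reg_pq g qg0; apply: reg_pq; rewrite polyps_mulA qg0 polyps_mulr0. Qed.

Lemma ps_regularMXn p k : ps_regular p -> ps_regular (p * 'X^k).
Proof.
move=> reg_p g pg0; apply: reg_p; apply: functional_extensionality => n.
by rewrite -(polyps_mulMXn p k) pg0.
Qed.

Lemma ps_regular_lreg_coef0 p : GRing.lreg p`_0 -> ps_regular p.
Proof.
move=> reg_p0 g pg0; apply: functional_extensionality => n.
elim/ltn_ind: n => n IHn; apply: reg_p0; rewrite mulr0 /ps0.
have := congr1 (fun h => h n) pg0; rewrite /polyps_mul big_ord_recl subn0.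
rewrite big1 ?addr0 // => -[i lt_in] _.
by rewrite IHn ?mulr0 //= subnSK // leq_subr.
Qed.

Lemma ps_regularD_nilpotent p a : ps_regular p -> nilpotent a -> ps_regular (p + a).
Proof.
move=> reg_p [n an0]; apply: (@ps_regularMl (\sum_(i < n) p ^+ (n.-1 - i) * (- a) ^+ i)).
have := subrXX p (- a) n; rewrite exprNn an0 mulr0 subr0 opprK mulrC => <-.
exact: ps_regularX.
Qed.

Lemma ps_regular_first_lreg_coef p k :
  (forall i, (i < k)%N -> nilpotent p`_i) -> GRing.lreg p`_k -> ps_regular p.
Proof.
move=> nil_low reg_pk; rewrite -(poly_take_drop k p) addrC.
apply: ps_regularD_nilpotent; last exact: nilpotent_take_poly.
by apply/ps_regularMXn/ps_regular_lreg_coef0; rewrite coef_drop_poly.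
Qed.

Lemma PolyPS_exp p f n :
  iter n (PolyPS_mul (p, f)) (PolyPS_one R) = (p ^+ n, polyps_mul (p ^+ n.-1 *+ n) f).
Proof.
elim: n => [|n IHn]; first by rewrite /= mulr0n polyps_mul0.
rewrite iterS IHn /PolyPS_mul /triv_ext_mul /= -exprS -polyps_mulA -polyps_mulDl.
by case: n {IHn} => [|n]; rewrite ?mulr0n ?mulr0 ?add0r //= mulrnAr -exprS -mulrSr.
Qed.

Lemma PolyPS_nilpotent p f :
  nilpotent p -> nilpotent_in (@PolyPS_mul R) (PolyPS_one R) (PolyPS_zero R) (p, f).
Proof.
by move=> [n pn0]; exists n.+1; rewrite PolyPS_exp exprS pn0 mulr0 mul0rn polyps_mul0.
Qed.

Lemma PolyPS_regular p f :
  ps_regular p -> regular_in (@PolyPS_mul R) (PolyPS_zero R) (p, f).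
Proof.
move=> reg_p [q g] [/= pq0 pg_qf0].
have qs0 : (fun n => q`_n) = ps0 R.
  apply: reg_p; rewrite polyps_mul_poly pq0.
  by apply: functional_extensionality => n; rewrite coef0.
have q0 : q = 0 by apply/polyP => n; rewrite coef0 (congr1 (fun h => h n) qs0).
have g0 : g = ps0 R by apply: reg_p; move: pg_qf0; rewrite q0 polyps_mul0 psaddr0.
by rewrite q0 g0.
Qed.

End PolySeriesAction.

Theorem mainTheorem15 (R : comNzRingType) :
  PropertyD R ->
  PropertyD_in (@PolyPS_mul R) (PolyPS_one R) (PolyPS_zero R).
Proof.
move=> propD [p f]; split => [nnil_pf | reg_pf].
  have nnil_p : ~ nilpotent p by move/(PolyPS_nilpotent f).
  have [k [nil_low nnil_pk]] := exists_first_nonnilpotent_coef nnil_p.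
  apply/PolyPS_regular/(ps_regular_first_lreg_coef nil_low).
  by apply/regular_inP/propD; rewrite nilpotent_inP.
apply: regular_in_not_nilpotent reg_pf.
by case=> /eqP; rewrite oner_eq0.
Qed.
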